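(* There exists a (finite, eight-element) left-residuated po-groupoid $\mathbf G$ which satisfies the divisibility law $(x/y)\cdot y=(y/x)\cdot x$ and the double negation law $\neg\neg x=x$, but does not satisfy the equation $x\cdot y=\neg(\neg x/y)$, and for which $\mathbf A(\mathbf G)=(G,\oplus,\neg,0)$ with $x\oplus y=\neg(\neg x\cdot\neg y)$ is not a basic algebra (it violates $\neg(\neg x\oplus y)\oplus y=\neg(\neg y\oplus x)\oplus x$).
   Context: A (bounded integral) left-residuated po-groupoid is a structure $\mathbf G=(G,\le,\cdot,/,0,1)$ where $(G,\le,0,1)$ is a bounded poset with least element $0$ and greatest element $1$, $\cdot$ is a binary operation on $G$ with $1\cdot x=x\cdot 1=x$ for all $x$ (no associativity, commutativity or monotonicity is assumed), and $/$ is a binary operation on $G$ satisfying the left residuation law: for all $x,y,z\in G$, $x\cdot y\le z\iff x\le z/y$. The negation is $\neg x:=0/x$. A basic algebra is an algebra $(A,\oplus,\neg,0)$ of type $(2,1,0)$ satisfying $x\oplus 0=x$; $\neg\neg x=x$; $\neg(\neg x\oplus y)\oplus y=\neg(\neg y\oplus x)\oplus x$; $\neg(\neg(\neg(x\oplus y)\oplus y)\oplus z)\oplus(x\oplus z)=\neg 0$. *)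

From mathcomp Require Import all_boot.
Set Implicit Arguments. Unset Strict Implicit. Unset Printing Implicit Defensive.

Definition is_lrpog (T : Type) (le : rel T) (mul div : T -> T -> T)
    (zero one : T) : Prop :=
  (forall x, le x x) /\
  (forall x y, le x y -> le y x -> x = y) /\
  (forall x y z, le x y -> le y z -> le x z) /\
  (forall x, le zero x /\ le x one) /\
  (forall x, mul one x = x /\ mul x one = x) /\
  (forall x y z, le (mul x y) z <-> le x (div z y)).

Definition lneg (T : Type) (div : T -> T -> T) (zero : T) (x : T) : T :=
  div zero x.

Definition loplus (T : Type) (mul div : T -> T -> T) (zero : T) (x y : T) : T :=
  lneg div zero (mul (lneg div zero x) (lneg div zero y)).

Definition is_basic_algebra (A : Type) (oplus : A -> A -> A) (neg : A -> A)
    (zero : A) : Prop :=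
  [/\ (forall x, oplus x zero = x),
      (forall x, neg (neg x) = x),
      (forall x y, oplus (neg (oplus (neg x) y)) y = oplus (neg (oplus (neg y) x)) x)
    & (forall x y z,
         oplus (neg (oplus (neg (oplus (neg (oplus x y)) y)) z)) (oplus x z)
         = neg zero)].

From mathcomp Require Import all_boot.

Set Implicit Arguments.
Unset Strict Implicit.

(* The counterexample is finite, so every universally quantified law of it
   becomes a boolean [all] over an explicit enumeration of the carrier and is
   decided by evaluation; the failing laws are refuted by explicit instances. *)

Section EnumeratedLRPOG.

Variables (T : eqType) (s : seq T).
Variables (le : rel T) (mul div : T -> T -> T) (zero one : T).

Definition lrpogb : bool :=
  [&& all (fun x => le x x) s,
      all (fun x => all (fun y => le x y && le y x ==> (x == y)) s) s,
      all (fun x => all (fun y => all (fun z =>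
        le x y && le y z ==> le x z) s) s) s,
      all (fun x => le zero x && le x one) s,
      all (fun x => (mul one x == x) && (mul x one == x)) s &
      all (fun x => all (fun y => all (fun z =>
        le (mul x y) z == le x (div z y)) s) s) s].

Hypothesis s_full : forall x, x \in s.

Lemma all_fullP (P : pred T) : all P s -> forall x, P x.
Proof. by move/allP=> allPs x; exact: allPs. Qed.

Lemma all2_fullP (P : T -> pred T) :
  all (fun x => all (P x) s) s -> forall x y, P x y.
Proof. by move=> allPs x; apply: all_fullP; exact: all_fullP allPs x. Qed.

Lemma all3_fullP (P : T -> T -> pred T) :
  all (fun x => all (fun y => all (P x y) s) s) s -> forall x y z, P x y z.
Proof. by move=> allPs x y; apply: all_fullP; exact: all2_fullP allPs x y. Qed.

Lemma lrpogbP : lrpogb -> is_lrpog le mul div zero one.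
Proof.
case/and5P=> /all_fullP refl /all2_fullP anti /all3_fullP trans
  /all_fullP bnd /andP[/all_fullP unit /all3_fullP res].
split; first exact: refl.
split=> [x y lexy leyx | ]; first by apply/eqP/(implyP (anti x y)); rewrite lexy.
split=> [x y z lexy leyz | ]; first by apply/(implyP (trans x y z)); rewrite lexy.
split=> [x | ]; first exact/andP.
split=> [x | x y z]; first by case/andP: (unit x) => /eqP-> /eqP->.
by rewrite (eqP (res x y z)).
Qed.

End EnumeratedLRPOG.

Definition G := 'I_8.

(* Reduction mod 8 keeps the value computable, unlike [inord], whose
   membership test is opaque to evaluation. *)
Definition elt (n : nat) : G := Ordinal (ltn_pmod n (isT : 0 < 8)).

Definition enumG : seq G := map elt (iota 0 8).

Lemma enumG_full (x : G) : x \in enumG.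
Proof.
apply/mapP; exists (val x); first by rewrite mem_iota ltn_ord.
by apply: val_inj; rewrite /= modn_small.
Qed.

Definition leG : rel G := fun x y =>
  [|| x == y, val x == 0, val y == 7,
      (val x == 1) && (val y \in [:: 4; 5; 6])
    | (val x \in [:: 2; 3]) && (val y == 4)].

Definition table (t : seq (seq nat)) (x y : G) : G := elt (nth 0 (nth [::] t x) y).

Definition mulG : G -> G -> G := table
  [:: [:: 0; 0; 0; 0; 0; 0; 0; 0];
      [:: 0; 0; 0; 0; 0; 1; 1; 1];
      [:: 0; 0; 2; 3; 2; 0; 1; 2];
      [:: 0; 0; 2; 3; 2; 1; 0; 3];
      [:: 0; 0; 2; 3; 2; 1; 1; 4];
      [:: 0; 1; 0; 3; 3; 5; 6; 5];
      [:: 0; 1; 2; 0; 1; 5; 6; 6];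
      [:: 0; 1; 2; 3; 4; 5; 6; 7]].

(* Row [z], column [y] holds [z / y]. *)
Definition divG : G -> G -> G := table
  [:: [:: 7; 4; 5; 6; 1; 2; 3; 0];
      [:: 7; 7; 5; 6; 6; 4; 4; 1];
      [:: 7; 4; 7; 6; 4; 2; 3; 2];
      [:: 7; 4; 5; 7; 5; 2; 3; 3];
      [:: 7; 7; 7; 7; 7; 4; 4; 4];
      [:: 7; 7; 5; 6; 6; 7; 4; 5];
      [:: 7; 7; 5; 6; 6; 4; 7; 6];
      [:: 7; 7; 7; 7; 7; 7; 7; 7]].

Notation negG := (lneg divG (elt 0)).
Notation oplusG := (loplus mulG divG (elt 0)).

Lemma G_lrpog : is_lrpog leG mulG divG (elt 0) (elt 7).
Proof. by apply: (lrpogbP enumG_full); vm_compute. Qed.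

Lemma G_divisibility x y : mulG (divG x y) y = mulG (divG y x) x.
Proof. by apply/eqP; move: x y; apply: (all2_fullP enumG_full); vm_compute. Qed.

Lemma G_double_negation x : negG (negG x) = x.
Proof. by apply/eqP; move: x; apply: (all_fullP enumG_full); vm_compute. Qed.

Lemma G_mul_neg_div_counterexample :
  mulG (elt 2) (elt 4) != negG (divG (negG (elt 2)) (elt 4)).
Proof. by vm_compute. Qed.

Lemma G_oplus_commutation_counterexample :
  oplusG (negG (oplusG (negG (elt 1)) (elt 2))) (elt 2)
  != oplusG (negG (oplusG (negG (elt 2)) (elt 1))) (elt 1).
Proof. by vm_compute. Qed.

Theorem mainTheorem9 :
  exists (T : finType) (le : rel T) (mul div : T -> T -> T) (zero one : T),
    #|T| = 8 /\
    is_lrpog le mul div zero one /\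
    (forall x y, mul (div x y) y = mul (div y x) x) /\
    (forall x, lneg div zero (lneg div zero x) = x) /\
    ~ (forall x y, mul x y = lneg div zero (div (lneg div zero x) y)) /\
    ~ is_basic_algebra (loplus mul div zero) (lneg div zero) zero /\
    ~ (forall x y,
             loplus mul div zero (lneg div zero (loplus mul div zero (lneg div zero x) y)) y
             = loplus mul div zero (lneg div zero (loplus mul div zero (lneg div zero y) x)) x).
Proof.
have not_commutation : ~ (forall x y : G,
    oplusG (negG (oplusG (negG x) y)) y = oplusG (negG (oplusG (negG y) x)) x).
  by move/(_ (elt 1) (elt 2))/eqP; apply/negP/G_oplus_commutation_counterexample.
exists G, leG, mulG, divG, (elt 0), (elt 7).
split; first exact: card_ord.
split; first exact: G_lrpog.
split; first exact: G_divisibility.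
split; first exact: G_double_negation.
split; first by move/(_ (elt 2) (elt 4))/eqP; apply/negP/G_mul_neg_div_counterexample.
split; last exact: not_commutation.
by case=> _ _ commutation _; apply: not_commutation.
Qed.
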